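(* Let $G$ be a connected graph with $n\geq 2$ vertices and $m$ edges, and let $T(G)$ be its triangulation. Then $$R(T(G))=\frac{2}{3}R(G)+\frac{1}{3}R^+(G)+\frac{1}{6}R^*(G)+\frac{3m^2-n^2+2mn-2m+n}{6}.$$
   Context: All graphs are finite, undirected, without loops or multiple edges. For a connected graph $H$ and vertices $i,j$, the resistance distance $\Omega_{ij}$ is the effective resistance between $i$ and $j$ in the electrical network obtained from $H$ by replacing each edge by a unit resistor. With $d_i$ the degree of vertex $i$ in $H$ and sums over unordered pairs of distinct vertices of $H$: $R(H)=\sum_{\{i,j\}\subseteq V(H)}\Omega_{ij}$ (Kirchhoff index), $R^+(H)=\sum_{\{i,j\}\subseteq V(H)}(d_i+d_j)\Omega_{ij}$ (additive degree-Kirchhoff index), and $R^*(H)=\sum_{\{i,j\}\subseteq V(H)}d_id_j\Omega_{ij}$ (multiplicative degree-Kirchhoff index). The triangulation $T(G)$ is obtained from $G$ by adding, for each edge $uv$, a new vertex $w$ adjacent to both $u$ and $v$ (keeping the edge $uv$), so each edge becomes a triangle $uwv$. *)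

From HB Require Import structures.
From mathcomp Require Import all_boot all_order all_algebra.
Set Implicit Arguments. Unset Strict Implicit. Unset Printing Implicit Defensive.
Import Order.TTheory GRing.Theory Num.Theory.
Local Open Scope ring_scope.

(* A finite simple graph is a symmetric irreflexive relation e on a finType V. *)

Section Graphs.
Variable V : finType.
Variable e : rel V.

Definition deg (v : V) : nat := #|[set w | e v w]|.

Definition is_edge (A : {set V}) : bool :=
  [exists x, exists y, e x y && (A == [set x; y])].

Definition edges : {set {set V}} := [set A | is_edge A].

Definition nedges : nat := #|edges|.

Definition connected_graph : Prop := forall x y : V, connect e x y.

Definition laplacian (R : pzRingType) : 'M[R]_#|V| :=
  \matrix_(i, j) (if i == j then (deg (enum_val i))%:R
                  else - (e (enum_val i) (enum_val j))%:R).

(* Resistance distance (effective resistance with unit resistors):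
   inject a unit current at i and extract it at j; by Kirchhoff's and Ohm's
   laws the vertex potentials x satisfy  x L = e_i - e_j  (L symmetric);
   the effective resistance is the potential difference x_i - x_j.
   A solution x is obtained with the partial inverse pinvmx (it exists when
   the graph is connected, and any solution gives the same difference). *)
Definition resistance (R : fieldType) (i j : V) : R :=
  let u : 'rV[R]_#|V| :=
    \row_k ((k == enum_rank i)%:R - (k == enum_rank j)%:R) in
  let x := u *m pinvmx (laplacian R) in
  x 0 (enum_rank i) - x 0 (enum_rank j).

(* sums over unordered pairs {i,j} of distinct vertices *)
Definition kirchhoff (R : fieldType) : R :=
  \sum_(i : V) \sum_(j : V | (enum_rank i < enum_rank j)%N) resistance R i j.

Definition add_degree_kirchhoff (R : fieldType) : R :=
  \sum_(i : V) \sum_(j : V | (enum_rank i < enum_rank j)%N)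
     ((deg i + deg j)%:R * resistance R i j).

Definition mul_degree_kirchhoff (R : fieldType) : R :=
  \sum_(i : V) \sum_(j : V | (enum_rank i < enum_rank j)%N)
     ((deg i * deg j)%:R * resistance R i j).

End Graphs.

(* Triangulation T(G): vertices of G plus one new vertex per edge {u,v},
   adjacent to u and v; the original edges are kept. *)
Definition tri_vertex (V : finType) (e : rel V) : finType :=
  (V + {A : {set V} | is_edge e A})%type.

Definition tri_rel (V : finType) (e : rel V) : rel (tri_vertex e) :=
  fun a b =>
    match a, b with
    | inl x, inl y => e x y
    | inl x, inr A => x \in val A
    | inr A, inl x => x \in val A
    | inr _, inr _ => false
    end.

Arguments laplacian {V} e R.
Arguments resistance {V} e R i j.
Arguments kirchhoff {V} e R.
Arguments add_degree_kirchhoff {V} e R.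
Arguments mul_degree_kirchhoff {V} e R.
Arguments tri_rel {V} e a b.
Arguments tri_vertex {V} e.

From HB Require Import structures.
From mathcomp Require Import all_boot all_order all_algebra.
From mathcomp Require Import ring.
Set Implicit Arguments. Unset Strict Implicit. Unset Printing Implicit Defensive.
Import Order.TTheory GRing.Theory Num.Theory.
Local Open Scope ring_scope.

(* Eliminating the new vertex of an edge uv of T(G) sends a current injected
   there half to u and half to v (this is p_s = [tri_proj s]) and turns the
   edge uv into a conductance 3/2.  So a potential on T(G) for a current f is
   2/3 of the G-potential of the pushed-down current on old vertices, and the
   mean of the endpoints plus f/2 on a new vertex ([tri_lift]).  This gives
   Omega_T(s,t) = -1/3 sum_ij g_i g_j Omega(i,j) + [s new]/2 + [t new]/2 for
   s <> t, with g = p_s - p_t.  Summed over all s, t, this only requires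
   sum_s p_s(i) = 1 + d_i/2, sum_s p_s(i) p_s(j) = [ij edge]/4 for i <> j, and
   Foster's theorem: the resistances of the edges of G add up to n - 1. *)

Lemma sum_sym_pairs (T : finType) (M : nmodType) (F : T -> T -> M) :
  (forall i j, F i j = F j i) -> (forall i, F i i = 0) ->
  \sum_i \sum_j F i j = (\sum_i \sum_(j | (enum_rank i < enum_rank j)%N) F i j) *+ 2.
Proof.
move=> FC F0.
have split_row i : \sum_j F i j = \sum_(j | (enum_rank i < enum_rank j)%N) F i j
                                 + \sum_(j | (enum_rank j < enum_rank i)%N) F i j.
  rewrite (bigD1 i) //= F0 add0r (bigID (fun j => (enum_rank i < enum_rank j)%N)) /=.
  congr (_ + _); apply: eq_bigl => j; case: (eqVneq j i) => [->|ji]; rewrite ?ltnn //=.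
  by rewrite -leqNgt leq_eqVlt (inj_eq val_inj) (inj_eq enum_rank_inj) (negPf ji).
rewrite (eq_bigr _ (fun i _ => split_row i)) big_split /= mulr2n; congr (_ + _).
rewrite (exchange_big_dep xpredT) //=; apply: eq_bigr => i _.
by apply: eq_bigr => j _; rewrite FC.
Qed.

Lemma sum2_mulBB (T : finType) (R : comNzRingType) (a b : T -> R) :
  \sum_s \sum_t (a s - a t) * (b s - b t) =
  2 * #|T|%:R * \sum_s a s * b s - 2 * ((\sum_s a s) * (\sum_s b s)).
Proof.
have inner s : \sum_t (a s - a t) * (b s - b t) =
    #|T|%:R * (a s * b s) + \sum_t a t * b t - a s * \sum_t b t - b s * \sum_t a t.
  rewrite (eq_bigr (fun t => a s * b s + a t * b t - a s * b t - b s * a t)); last first.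
    by move=> t _; ring.
  by rewrite !sumrB big_split /= sumr_const -!mulr_sumr mulr_natl.
rewrite (eq_bigr _ (fun s _ => inner s)) !sumrB big_split /= sumr_const -!mulr_sumr -!mulr_suml.
rewrite -mulr_natl; ring.
Qed.

Lemma exchange_big_pairs (I J : finType) (M : nmodType) (F : I -> I -> J -> J -> M) :
  \sum_s \sum_t \sum_i \sum_j F s t i j = \sum_i \sum_j \sum_s \sum_t F s t i j.
Proof.
under eq_bigr => s _ do rewrite exchange_big.
under eq_bigr => s _ do under eq_bigr => i _ do rewrite exchange_big.
by rewrite exchange_big; apply: eq_bigr => i _; rewrite exchange_big.
Qed.

Lemma sum_enum_rank (V : finType) (M : nmodType) (F : 'I_#|V| -> M) :
  \sum_k F k = \sum_v F (enum_rank v).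
Proof. by rewrite (reindex (@enum_rank V)) //; apply: onW_bij; exact: enum_rank_bij. Qed.

Lemma sum_indicator_mul (T : finType) (R : pzSemiRingType) (j : T) (F : T -> R) :
  \sum_i (i == j)%:R * F i = F j.
Proof. by rewrite (bigD1 j) //= eqxx mul1r big1 ?addr0 // => i /negPf ->; rewrite mul0r. Qed.

Lemma sum_indicator (T : finType) (R : pzSemiRingType) (j : T) : \sum_i (i == j)%:R = 1 :> R.
Proof.
by rewrite (eq_bigr (fun i => (i == j)%:R * 1)) ?sum_indicator_mul // => i _; rewrite mulr1.
Qed.

Section LaplacianAlgebra.
Variables (V : finType) (e : rel V) (R : fieldType).
Hypotheses (e_sym : symmetric e) (e_irr : irreflexive e).

Local Notation L := (laplacian e R).

Definition vrow (c : V -> R) : 'rV[R]_#|V| := \row_k c (enum_val k).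

Lemma vrowE c v : vrow c 0 (enum_rank v) = c v.
Proof. by rewrite mxE enum_rankK. Qed.

Lemma laplacianE v w :
  L (enum_rank v) (enum_rank w) = if v == w then (deg e v)%:R else - (e v w)%:R.
Proof. by rewrite mxE !enum_rankK (inj_eq enum_rank_inj). Qed.

Lemma trmx_laplacian : L^T = L.
Proof.
by apply/matrixP=> i j; rewrite !mxE eq_sym; case: eqP => [->|_] //; rewrite e_sym.
Qed.

Lemma natr_deg v : (deg e v)%:R = \sum_(u | e v u) 1 :> R.
Proof. by rewrite sumr_const /deg cardsE. Qed.

Lemma laplacian_rowE (x : 'rV[R]_#|V|) v :
  (x *m L) 0 (enum_rank v) =
  \sum_(u | e v u) (x 0 (enum_rank v) - x 0 (enum_rank u)).
Proof.
rewrite mxE sum_enum_rank (bigD1 v) //= laplacianE eqxx sumrB.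
congr (_ + _); first by rewrite natr_deg mulr_sumr; apply: eq_bigr => u _; rewrite mulr1.
rewrite -sumrN big_mkcond [RHS]big_mkcond; apply: eq_bigr => w _ /=.
rewrite laplacianE e_sym; case: eqP => [->|_] /=; first by rewrite e_irr.
by case: (e v w); rewrite ?mulrN ?mulr1 ?mulr0 ?oppr0.
Qed.

Lemma vrow_laplacianE c v :
  (vrow c *m L) 0 (enum_rank v) = \sum_(u | e v u) (c v - c u).
Proof. by rewrite laplacian_rowE; apply: eq_bigr => u _; rewrite !vrowE. Qed.

Definition unit_current (s t : V) : 'rV[R]_#|V| :=
  delta_mx 0 (enum_rank s) - delta_mx 0 (enum_rank t).

Lemma unit_currentE s t v :
  unit_current s t 0 (enum_rank v) = (v == s)%:R - (v == t)%:R.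
Proof. by rewrite !mxE !(inj_eq enum_rank_inj). Qed.

Lemma unit_current_mul s t n (A : 'M[R]_(#|V|, n)) :
  unit_current s t *m A = row (enum_rank s) A - row (enum_rank t) A.
Proof. by rewrite mulmxBl -!rowE. Qed.

Lemma mul_unit_current_tr s t (x : 'rV[R]_#|V|) :
  (x *m (unit_current s t)^T) 0 0 = x 0 (enum_rank s) - x 0 (enum_rank t).
Proof. by rewrite linearB /= !trmx_delta mulmxBr -!colE !mxE. Qed.

Lemma resistance_currentE s t :
  resistance e R s t =
  (unit_current s t *m pinvmx L) 0 (enum_rank s)
  - (unit_current s t *m pinvmx L) 0 (enum_rank t).
Proof.
rewrite /resistance /=.
suff -> : \row_k ((k == enum_rank s)%:R - (k == enum_rank t)%:R) = unit_current s t by [].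
by apply/rowP => k; rewrite !mxE.
Qed.

(* [pinvmx L] is only some generalized inverse of L; it need not be symmetric. *)
Definition lap_ginv (v w : V) : R := pinvmx L (enum_rank v) (enum_rank w).

Local Notation G := lap_ginv.

Lemma resistance_ginv i j : resistance e R i j = G i i - G j i - G i j + G j j.
Proof.
rewrite resistance_currentE unit_current_mul /lap_ginv.
by set P := pinvmx L; rewrite !mxE; ring.
Qed.

Lemma resistanceC i j : resistance e R i j = resistance e R j i.
Proof. by rewrite !resistance_ginv; ring. Qed.

Lemma resistancexx i : resistance e R i i = 0.
Proof. by rewrite resistance_ginv; ring. Qed.

Lemma resistance_potential s t (y : V -> R) :
  (forall v, \sum_(u | e v u) (y v - y u) = (v == s)%:R - (v == t)%:R) ->
  resistance e R s t = y s - y t.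
Proof.
move=> harm.
have yL : vrow y *m L = unit_current s t.
  by apply/rowP => k; rewrite -[k]enum_valK vrow_laplacianE unit_currentE harm.
have uT : (unit_current s t)^T = L *m (vrow y)^T by rewrite -yL trmx_mul trmx_laplacian.
rewrite resistance_currentE -mul_unit_current_tr uT -yL mulmxA mulmxKpV ?submxMl //.
by rewrite -mulmxA -uT mul_unit_current_tr !vrowE.
Qed.

Definition potential (g : V -> R) (v : V) : R := \sum_w g w * G w v.

Lemma vrow_mul_ginvE g v : (vrow g *m pinvmx L) 0 (enum_rank v) = potential g v.
Proof. by rewrite mxE sum_enum_rank; apply: eq_bigr => w _; rewrite vrowE. Qed.

Lemma resistance_quadratic (g : V -> R) : \sum_v g v = 0 ->
  \sum_i \sum_j g i * g j * resistance e R i j = - 2 * \sum_v g v * potential g v.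
Proof.
move=> g0.
have expand i j : g i * g j * resistance e R i j =
    g j * (g i * G i i) + g i * (g j * G j j) - g i * (g j * G j i) - g j * (g i * G i j).
  by rewrite resistance_ginv; ring.
under eq_bigr do under eq_bigr do rewrite expand.
under eq_bigr do rewrite !sumrB big_split /= -!mulr_sumr -mulr_suml g0 mul0r add0r.
rewrite !sumrB -mulr_suml g0 mul0r add0r exchange_big /=.
by under [X in _ - X]eq_bigr do rewrite -mulr_sumr; rewrite /potential; ring.
Qed.

Lemma sum_adjacent_resistance :
  \sum_i \sum_(j | e i j) resistance e R i j = 2 * \tr (pinvmx L *m L).
Proof.
have split i j : resistance e R i j = (G i i - G i j) + (G j j - G j i).
  by rewrite resistance_ginv; ring.
have swap : \sum_i \sum_(j | e i j) (G j j - G j i) = \sum_i \sum_(j | e i j) (G i i - G i j).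
  rewrite (exchange_big_dep xpredT) //=; apply: eq_bigr => i _.
  by apply: eq_bigl => j; rewrite e_sym.
under eq_bigr => i _ do rewrite (eq_bigr _ (fun j _ => split i j)) big_split.
rewrite big_split /= swap -mulr2n -[_ *+ 2]mulr_natl /mxtrace sum_enum_rank /lap_ginv.
congr (_ * _); move: (pinvmx L) => P; apply: eq_bigr => i _.
transitivity ((row (enum_rank i) P *m L) 0 (enum_rank i)); last by rewrite -row_mul mxE.
by rewrite laplacian_rowE; apply: eq_bigr => j _; rewrite !mxE.
Qed.

Lemma dirichlet_energy (c : V -> R) :
  \sum_v \sum_(u | e v u) (c v - c u) ^+ 2 = 2 * \sum_v c v * \sum_(u | e v u) (c v - c u).
Proof.
have swap : \sum_v \sum_(u | e v u) c u * (c u - c v) =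
            \sum_v c v * \sum_(u | e v u) (c v - c u).
  rewrite (exchange_big_dep xpredT) //=; apply: eq_bigr => u _; rewrite mulr_sumr.
  by apply: eq_bigl => v; rewrite e_sym.
transitivity (\sum_v c v * \sum_(u | e v u) (c v - c u)
              + \sum_v \sum_(u | e v u) c u * (c u - c v)).
  rewrite -big_split; apply: eq_bigr => v _.
  by rewrite mulr_sumr -big_split; apply: eq_bigr => u _ /=; ring.
by rewrite swap -mulr2n -[_ *+ 2]mulr_natl.
Qed.

End LaplacianAlgebra.

Section ConnectedLaplacian.
Variables (V : finType) (e : rel V) (R : realFieldType).
Hypotheses (e_sym : symmetric e) (e_irr : irreflexive e) (e_conn : connected_graph e).

Local Notation L := (laplacian e R).

Lemma harmonic_const (c : V -> R) :
  (forall v, \sum_(u | e v u) (c v - c u) = 0) -> forall a b, c a = c b.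
Proof.
move=> harm.
have term_ge0 v u : 0 <= (c v - c u) ^+ 2 by exact: sqr_ge0.
have row_ge0 v : 0 <= \sum_(u | e v u) (c v - c u) ^+ 2 by apply: sumr_ge0.
have /(psumr_eq0P (fun v _ => row_ge0 v)) energy0 :
    \sum_v \sum_(u | e v u) (c v - c u) ^+ 2 = 0.
  by rewrite dirichlet_energy // big1 ?mulr0 // => v _; rewrite harm mulr0.
have edge_eq v u : e v u -> c v = c u.
  move=> evu; have /(psumr_eq0P (fun u _ => term_ge0 v u)) := energy0 v isT.
  by move=> /(_ u evu) /eqP; rewrite sqrf_eq0 subr_eq0 => /eqP.
move=> a b; have cl : closed e [pred x | c x == c a].
  by move=> x y /edge_eq cxy; rewrite !inE cxy.
by have := closed_connect cl (e_conn a b); rewrite !inE eqxx => /esym/eqP.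
Qed.

Lemma sumr0_sub_laplacian (x : 'rV[R]_#|V|) : \sum_k x 0 k = 0 -> (x <= L)%MS.
Proof.
move=> x0; rewrite submxE; move: (cokermx L) (mulmx_coker L) => C LC.
apply/eqP/rowP => j; rewrite !mxE.
have CL : C^T *m L = 0 by rewrite -[L in _ *m L]trmx_laplacian // -trmx_mul LC trmx0.
have col_const : forall k l, C k j = C l j.
  move=> k l; rewrite -[k]enum_valK -[l]enum_valK.
  apply: (harmonic_const (c := fun v => C (enum_rank v) j)) => v.
  transitivity ((row j C^T *m L) 0 (enum_rank v)); last by rewrite -row_mul CL !mxE.
  by rewrite laplacian_rowE //; apply: eq_bigr => u _; rewrite !mxE.
case: (pickP (fun _ : 'I_#|V| => true)) => [k0 _|no_k]; last by rewrite big_pred0.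
rewrite (eq_bigr (fun k => x 0 k * C k0 j)); last by move=> k _; rewrite (col_const k k0).
by rewrite -mulr_suml x0 mul0r.
Qed.

Lemma laplacian_potential (g : V -> R) : \sum_v g v = 0 ->
  forall v, \sum_(u | e v u) (potential e g v - potential e g u) = g v.
Proof.
move=> g0 v.
have sub : (vrow g <= L)%MS.
  apply: sumr0_sub_laplacian; rewrite sum_enum_rank -[RHS]g0.
  by apply: eq_bigr => w _; rewrite vrowE.
have := congr1 (fun A : 'rV[R]_#|V| => A 0 (enum_rank v)) (mulmxKpV sub).
rewrite /= laplacian_rowE // vrowE => <-.
by apply: eq_bigr => u _; rewrite !vrow_mul_ginvE.
Qed.

Lemma laplacian_mul_ones : L *m const_mx 1 = 0 :> 'cV_#|V|.
Proof.
apply: trmx_inj; rewrite trmx_mul trmx_laplacian // trmx_const trmx0.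
apply/rowP => k; rewrite -[k]enum_valK laplacian_rowE // [RHS]mxE big1 // => u _.
by rewrite !mxE subrr.
Qed.

Lemma mxtrace_pinv_laplacian : (0 < #|V|)%N -> \tr (pinvmx L *m L) = #|V|%:R - 1.
Proof.
move=> V_gt0; have n_neq0 : (#|V|%:R : R) != 0 by rewrite pnatr_eq0 -lt0n.
have proj (x : 'rV[R]_#|V|) : \sum_k x 0 k = 0 -> x *m (pinvmx L *m L) = x.
  by move=> /sumr0_sub_laplacian sub; rewrite mulmxA mulmxKpV.
have P1 : pinvmx L *m L *m (const_mx 1 : 'cV_#|V|) = 0.
  by rewrite -mulmxA laplacian_mul_ones mulmx0.
move: (pinvmx L *m L) proj P1 => P proj P1.
have colsum : \sum_k \sum_l P l k = 0.
  rewrite exchange_big /=; apply: big1 => l _.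
  transitivity ((P *m (const_mx 1 : 'cV_#|V|)) l 0); last by rewrite P1 mxE.
  by rewrite mxE; apply: eq_bigr => k _; rewrite mxE mulr1.
have diag k : P k k = 1 - #|V|%:R^-1 + #|V|%:R^-1 * \sum_l P l k.
  pose x := \row_l ((l == k)%:R - #|V|%:R^-1) : 'rV[R]_#|V|.
  have x0 : \sum_l x 0 l = 0.
    under eq_bigr do rewrite mxE.
    by rewrite sumrB sum_indicator sumr_const card_ord -[X in 1 - X]mulr_natr mulVf ?subrr.
  have := congr1 (fun y : 'rV[R]_#|V| => y 0 k) (proj x x0).
  rewrite [LHS]mxE [RHS]mxE eqxx => <-.
  under eq_bigr do rewrite mxE mulrBl.
  by rewrite sumrB sum_indicator_mul -mulr_sumr subrK.
rewrite /mxtrace (eq_bigr _ (fun k _ => diag k)) big_split /= -mulr_sumr colsum mulr0 addr0.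
by rewrite sumr_const card_ord -[LHS]mulr_natr mulrBl mul1r mulVf.
Qed.

Lemma foster : (0 < #|V|)%N ->
  \sum_i \sum_(j | e i j) resistance e R i j = 2 * (#|V|%:R - 1).
Proof. by move=> V_gt0; rewrite sum_adjacent_resistance // mxtrace_pinv_laplacian. Qed.

End ConnectedLaplacian.

Section KirchhoffIndices.
Variables (V : finType) (e : rel V) (R : numFieldType).

Lemma kirchhoffE : \sum_i \sum_j resistance e R i j = 2 * kirchhoff e R.
Proof. by rewrite (sum_sym_pairs (resistanceC e R) (resistancexx e R)) mulr_natl. Qed.

Lemma add_degree_kirchhoffE :
  \sum_i \sum_j (deg e i + deg e j)%:R * resistance e R i j = 2 * add_degree_kirchhoff e R.
Proof.
rewrite sum_sym_pairs ?mulr_natl // => [i j|i]; last by rewrite resistancexx mulr0.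
by rewrite addnC resistanceC.
Qed.

Lemma mul_degree_kirchhoffE :
  \sum_i \sum_j (deg e i * deg e j)%:R * resistance e R i j = 2 * mul_degree_kirchhoff e R.
Proof.
rewrite sum_sym_pairs ?mulr_natl // => [i j|i]; last by rewrite resistancexx mulr0.
by rewrite mulnC resistanceC.
Qed.

Lemma sum_degree_weighted_resistance :
  \sum_i \sum_j (1 + (deg e i)%:R / 2) * (1 + (deg e j)%:R / 2) * resistance e R i j
  = 2 * kirchhoff e R + add_degree_kirchhoff e R + mul_degree_kirchhoff e R / 2.
Proof.
have split i j : (1 + (deg e i)%:R / 2) * (1 + (deg e j)%:R / 2) * resistance e R i j =
    resistance e R i j + 1/2 * ((deg e i + deg e j)%:R * resistance e R i j)
    + 1/4 * ((deg e i * deg e j)%:R * resistance e R i j).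
  by rewrite natrD natrM; field.
transitivity (\sum_i \sum_j resistance e R i j
    + 1/2 * \sum_i \sum_j (deg e i + deg e j)%:R * resistance e R i j
    + 1/4 * \sum_i \sum_j (deg e i * deg e j)%:R * resistance e R i j).
  rewrite !mulr_sumr -!big_split; apply: eq_bigr => i _.
  by rewrite !mulr_sumr -!big_split; apply: eq_bigr => j _; rewrite split.
rewrite kirchhoffE add_degree_kirchhoffE mul_degree_kirchhoffE.
by field.
Qed.

End KirchhoffIndices.

Section Triangulation.
Variables (V : finType) (e : rel V).
Hypotheses (e_sym : symmetric e) (e_irr : irreflexive e) (e_conn : connected_graph e).

Local Notation E := {A : {set V} | is_edge e A}.
Local Notation TV := (tri_vertex e).

Lemma tri_sym : symmetric (tri_rel e).
Proof. by case=> [x|A] [y|B] //=; apply: e_sym. Qed.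

Lemma tri_irr : irreflexive (tri_rel e).
Proof. by case=> [x|A] //=; apply: e_irr. Qed.

Lemma edgeP A : is_edge e A -> exists x y, e x y /\ A = [set x; y].
Proof. by move=> /existsP[x /existsP[y /andP[exy /eqP ->]]]; exists x, y. Qed.

Lemma card_edge (A : E) : #|val A| = 2.
Proof.
have [x [y [exy ->]]] := edgeP (valP A); rewrite cards2.
by case: eqP => // xy; rewrite xy e_irr in exy.
Qed.

Lemma card_tri_vertex : #|TV| = (#|V| + nedges e)%N.
Proof. by rewrite card_sum card_sig /nedges /edges cardsE. Qed.

Lemma sum_edges_at (M : nmodType) v (F : {set V} -> M) :
  \sum_(A : E | v \in val A) F (val A) = \sum_(u | e v u) F [set v; u].
Proof.
have edgesE : \sum_(A : E | v \in val A) F (val A) = \sum_(B | is_edge e B && (v \in B)) F B.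
  rewrite [RHS](reindex_omap (val : E -> {set V}) insub); last first.
    by move=> B /andP[eB _]; rewrite insubT.
  by apply: eq_bigl => -[B eB] /=; rewrite insubT eB /= eqxx andbT.
rewrite edgesE (eq_bigl (mem [set [set v; u] | u in [set u | e v u]])); last first.
  move=> B; apply/andP/imsetP => [[/edgeP[x [y [exy ->]]] vxy] | [u]].
    rewrite in_set2 in vxy; case/orP: vxy => /eqP vx; subst.
      by exists y; rewrite ?inE.
    by exists x; [rewrite inE e_sym | rewrite setUC].
  rewrite inE => evu ->; split; last by rewrite set21.
  by apply/existsP; exists v; apply/existsP; exists u; rewrite evu eqxx.
rewrite big_imset /=; last first.
  move=> u u'; rewrite !inE => eu eu' /setP/(_ u); rewrite !in_set2 eqxx orbT.
  by move=> /esym/orP[/eqP uv|/eqP //]; rewrite uv e_irr in eu.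
by apply: eq_bigl => u; rewrite inE.
Qed.

Variable R : realFieldType.

Definition tri_proj (s : TV) (x : V) : R :=
  match s with
  | inl w => (x == w)%:R
  | inr A => (x \in val A)%:R / 2
  end.

Local Notation p := tri_proj.

Lemma sum_mem_mul (A : {set V}) (F : V -> R) : \sum_x (x \in A)%:R * F x = \sum_(x in A) F x.
Proof.
by rewrite [RHS]big_mkcond; apply: eq_bigr => x _; case: (x \in A); rewrite ?mul1r ?mul0r.
Qed.

Lemma tri_proj_sum s : \sum_x p s x = 1.
Proof.
case: s => [w|A] /=; first exact: sum_indicator.
rewrite -mulr_suml (eq_bigr (fun x => (x \in val A)%:R * 1)); last by move=> *; rewrite mulr1.
by rewrite sum_mem_mul sumr_const card_edge mulfV // pnatr_eq0.
Qed.

Lemma sum_mul_tri_proj (f : TV -> R) x :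
  \sum_b f b * p b x = f (inl x) + 1/2 * \sum_(A : E | x \in val A) f (inr A).
Proof.
rewrite big_sumType /=; congr (_ + _).
  rewrite (eq_bigr (fun w => (w == x)%:R * f (inl w))) ?sum_indicator_mul //.
  by move=> w _; rewrite mulrC eq_sym.
rewrite mulr_sumr [RHS]big_mkcond; apply: eq_bigr => A _.
by case: (x \in val A); rewrite /= ?mul1r ?mul0r ?mulr0 // mulrC.
Qed.

Lemma sum_mean_pair v u (Y : V -> R) : u != v ->
  \sum_x (x \in [set v; u])%:R / 2 * Y x = (Y v + Y u) / 2.
Proof.
move=> uv.
rewrite (eq_bigr (fun x => 2^-1 * ((x == v)%:R * Y x) + 2^-1 * ((x == u)%:R * Y x))).
  by rewrite big_split /= -!mulr_sumr !sum_indicator_mul; ring.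
move=> x _; rewrite in_set2; case: (eqVneq x v) => [->|xv] /=.
  by rewrite eq_sym (negPf uv) /=; ring.
by case: (x == u); rewrite /=; ring.
Qed.

Definition tri_push (f : TV -> R) (x : V) : R := \sum_b f b * p b x.

Definition tri_lift (f : TV -> R) (b : TV) : R :=
  let Y x := 2/3 * potential e (tri_push f) x in
  match b with
  | inl v => Y v
  | inr A => \sum_x p (inr A) x * Y x + f (inr A) / 2
  end.

Lemma tri_push_sum f : \sum_x tri_push f x = \sum_b f b.
Proof.
by rewrite exchange_big; apply: eq_bigr => b _; rewrite -mulr_sumr tri_proj_sum mulr1.
Qed.

Lemma laplacian_tri_lift f : \sum_b f b = 0 ->
  forall b, \sum_(c | tri_rel e b c) (tri_lift f b - tri_lift f c) = f b.
Proof.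
move=> f0; have g0 : \sum_x tri_push f x = 0 by rewrite tri_push_sum.
rewrite /tri_lift /=; set Y := fun x => 2/3 * potential e (tri_push f) x.
case=> [v|A]; rewrite big_sumType /=.
  have old_nbrs : \sum_(u | e v u) (Y v - Y u) = 2/3 * tri_push f v.
    rewrite -(laplacian_potential e_sym e_irr e_conn g0 v) mulr_sumr.
    by apply: eq_bigr => u _; rewrite /Y; ring.
  have new_nbrs : \sum_(A : E | v \in val A) (Y v - (\sum_x p (inr A) x * Y x + f (inr A) / 2))
      = 1/2 * \sum_(u | e v u) (Y v - Y u) - 1/2 * \sum_(A : E | v \in val A) f (inr A).
    pose mean (B : {set V}) := Y v - \sum_x (x \in B)%:R / 2 * Y x.
    rewrite (eq_bigr (fun A : E => mean (val A) - 1/2 * f (inr A))); last first.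
      by move=> A _; rewrite /mean /=; ring.
    rewrite sumrB (sum_edges_at _ mean) -mulr_sumr; congr (_ - _).
    rewrite mulr_sumr; apply: eq_bigr => u evu; rewrite /mean sum_mean_pair; first by field.
    by apply: contraTneq evu => ->; rewrite e_irr.
  by rewrite new_nbrs old_nbrs /tri_push sum_mul_tri_proj; field.
rewrite big_pred0_eq addr0 sumrB sumr_const card_edge.
under eq_bigr do rewrite mulrAC.
by rewrite -mulr_suml sum_mem_mul mulr2n; field.
Qed.

Lemma tri_lift_energy f :
  \sum_b f b * tri_lift f b =
  2/3 * \sum_x tri_push f x * potential e (tri_push f) x + 1/2 * \sum_(A : E) f (inr A) ^+ 2.
Proof.
set Y := fun x => 2/3 * potential e (tri_push f) x.
have push_side : 2/3 * \sum_x tri_push f x * potential e (tri_push f) x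
                 = \sum_b f b * \sum_x p b x * Y x.
  transitivity (\sum_x \sum_b f b * p b x * Y x).
    rewrite mulr_sumr; apply: eq_bigr => x _.
    by rewrite /tri_push mulrCA mulr_suml.
  rewrite exchange_big; apply: eq_bigr => b _.
  by rewrite mulr_sumr; apply: eq_bigr => x _; rewrite mulrA.
rewrite push_side !big_sumType /= -addrA; congr (_ + _).
  by apply: eq_bigr => v _; rewrite (eq_bigr (fun x => (x == v)%:R * Y x)) ?sum_indicator_mul.
by rewrite mulr_sumr -big_split; apply: eq_bigr => A _ /=; ring.
Qed.

Lemma tri_resistance s t :
  resistance (tri_rel e) R s t =
  - (1/3) * \sum_i \sum_j (p s i - p t i) * (p s j - p t j) * resistance e R i j
  + 1/2 * \sum_(A : E) ((inr A == s)%:R - (inr A == t)%:R) ^+ 2.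
Proof.
pose f b : R := (b == s)%:R - (b == t)%:R.
have f0 : \sum_b f b = 0 by rewrite sumrB !sum_indicator subrr.
have pushE x : tri_push f x = p s x - p t x.
  by rewrite /tri_push; under eq_bigr do rewrite mulrBl; rewrite sumrB !sum_indicator_mul.
have g0 : \sum_x tri_push f x = 0 by rewrite tri_push_sum.
rewrite (resistance_potential (tri_sym) (tri_irr) (laplacian_tri_lift f0)).
have -> : tri_lift f s - tri_lift f t = \sum_b f b * tri_lift f b.
  by under eq_bigr do rewrite mulrBl; rewrite sumrB !sum_indicator_mul.
have -> : \sum_i \sum_j (p s i - p t i) * (p s j - p t j) * resistance e R i j
          = - 2 * \sum_x tri_push f x * potential e (tri_push f) x.
  rewrite -resistance_quadratic //; apply: eq_bigr => i _; apply: eq_bigr => j _.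
  by rewrite !pushE.
by rewrite tri_lift_energy /f; field.
Qed.

Lemma sum_tri_proj i : \sum_s p s i = 1 + (deg e i)%:R / 2.
Proof.
rewrite big_sumType /= (eq_bigr (fun w => (w == i)%:R)); last by move=> w _; rewrite eq_sym.
rewrite sum_indicator -mulr_suml natr_deg -(sum_edges_at _ (fun _ => 1)) /=.
congr (_ + _ / _); rewrite [RHS]big_mkcond.
by apply: eq_bigr => A _; case: (i \in val A).
Qed.

Lemma sum_tri_proj_mul i j : i != j -> \sum_s p s i * p s j = (e i j)%:R / 4.
Proof.
move=> ij; rewrite big_sumType /= big1 ?add0r; last first.
  by move=> w _; case: (eqVneq i w) => [<-|_]; rewrite ?mul0r // eq_sym (negPf ij) mulr0.
rewrite (eq_bigr (fun A : E => if i \in val A then (j \in val A)%:R / 4 else 0)); last first.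
  by move=> [B eB] _ /=; case: (i \in B); rewrite ?mul0r //= mulr1n; field.
rewrite -big_mkcond (sum_edges_at _ (fun B => (j \in B)%:R / 4)) big_mkcond.
rewrite (eq_bigr (fun u => (u == j)%:R * ((e i u)%:R / 4))) ?sum_indicator_mul //.
move=> u _; rewrite in_set2 eq_sym (negPf ij) /= eq_sym.
by case: (e i u); case: (u == j); rewrite /= ?mul1r ?mul0r ?mulr1 ?mul0r.
Qed.

Lemma sum_tri_spread : (0 < #|V|)%N ->
  \sum_s \sum_t \sum_i \sum_j (p s i - p t i) * (p s j - p t j) * resistance e R i j
  = #|TV|%:R * (#|V|%:R - 1)
    - 2 * \sum_i \sum_j (1 + (deg e i)%:R / 2) * (1 + (deg e j)%:R / 2) * resistance e R i j.
Proof.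
move=> V_gt0.
have pair i j : \sum_s \sum_t (p s i - p t i) * (p s j - p t j) * resistance e R i j =
    #|TV|%:R * ((e i j)%:R * resistance e R i j / 2)
    - 2 * ((1 + (deg e i)%:R / 2) * (1 + (deg e j)%:R / 2) * resistance e R i j).
  under eq_bigr do rewrite -mulr_suml.
  rewrite -mulr_suml sum2_mulBB !sum_tri_proj.
  have [<-|ij] := eqVneq i j; first by rewrite resistancexx; ring.
  by rewrite sum_tri_proj_mul //; field.
have adjacent : \sum_i \sum_j (e i j)%:R * resistance e R i j / 2 = #|V|%:R - 1.
  transitivity (1/2 * \sum_i \sum_(j | e i j) resistance e R i j); last first.
    by rewrite foster //; field.
  rewrite mulr_sumr; apply: eq_bigr => i _; rewrite mulr_sumr [RHS]big_mkcond.
  by apply: eq_bigr => j _; case: (e i j); rewrite /= ?mul0r ?mulr0 //; field.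
rewrite exchange_big_pairs.
under eq_bigr => i _ do rewrite (eq_bigr _ (fun j _ => pair i j)) sumrB -!mulr_sumr.
by rewrite sumrB -!mulr_sumr adjacent.
Qed.

Lemma sum_tri_current_sq :
  \sum_(s : TV) \sum_(t : TV) \sum_(A : E) ((inr A == s)%:R - (inr A == t)%:R) ^+ 2
  = (nedges e)%:R * (2 * #|TV|%:R - 2) :> R.
Proof.
under eq_bigr => s _ do rewrite exchange_big.
rewrite exchange_big (eq_bigr (fun _ => 2 * #|TV|%:R - 2)).
  by rewrite sumr_const card_sig /nedges /edges cardsE [RHS]mulr_natl.
move=> A _; under eq_bigr do under eq_bigr do rewrite expr2 ![inr A == _]eq_sym.
by rewrite sum2_mulBB sum_indicator sum_indicator_mul eqxx !mulr1.
Qed.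

Lemma sum_tri_resistance : (0 < #|V|)%N ->
  \sum_s \sum_t resistance (tri_rel e) R s t =
  - (1/3) * (#|TV|%:R * (#|V|%:R - 1)
    - 2 * \sum_i \sum_j (1 + (deg e i)%:R / 2) * (1 + (deg e j)%:R / 2) * resistance e R i j)
  + 1/2 * ((nedges e)%:R * (2 * #|TV|%:R - 2)).
Proof.
move=> V_gt0; rewrite -sum_tri_spread // -sum_tri_current_sq !mulr_sumr -big_split.
apply: eq_bigr => s _; rewrite !mulr_sumr -big_split.
by apply: eq_bigr => t _; rewrite tri_resistance.
Qed.

End Triangulation.

Unset Implicit Arguments.
Theorem theorem4p3 (R : realFieldType) (V : finType) (e : rel V)
    (e_sym : symmetric e) (e_irr : irreflexive e)
    (e_conn : connected_graph e) (n_ge2 : (2 <= #|V|)%N) :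
  let n : R := (#|V|)%:R in
  let m : R := (nedges e)%:R in
  kirchhoff (tri_rel e) R =
    2 / 3 * kirchhoff e R + 1 / 3 * add_degree_kirchhoff e R
    + 1 / 6 * mul_degree_kirchhoff e R
    + (3 * m ^+ 2 - n ^+ 2 + 2 * m * n - 2 * m + n) / 6.
Proof.
move=> n m; have V_gt0 : (0 < #|V|)%N by apply: leq_trans n_ge2.
have two_neq0 : (2 : R) != 0 by rewrite pnatr_eq0.
apply: (mulfI two_neq0); rewrite -kirchhoffE sum_tri_resistance //.
rewrite sum_degree_weighted_resistance card_tri_vertex natrD /n /m.
by field.
Qed.
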